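(* For unitary modified types $\boldsymbol\mu,\boldsymbol\nu,\boldsymbol\lambda$: $r_{\boldsymbol\mu,\boldsymbol\nu}^{\boldsymbol\lambda}=0$ whenever $|\boldsymbol\lambda|>|\boldsymbol\mu|+|\boldsymbol\nu|$, and whenever $|\boldsymbol\lambda|=|\boldsymbol\mu|+|\boldsymbol\nu|$ the polynomial $r_{\boldsymbol\mu,\boldsymbol\nu}^{\boldsymbol\lambda}$ is a constant lying in $\mathbb{Z}$. Equivalently, the algebra with basis $\{K_{\boldsymbol\mu}\}$ over $\mathcal{R}_{-q}$ and multiplication $K_{\boldsymbol\mu}K_{\boldsymbol\nu}=\sum_{\boldsymbol\lambda}r_{\boldsymbol\mu,\boldsymbol\nu}^{\boldsymbol\lambda}K_{\boldsymbol\lambda}$ is filtered with $K_{\boldsymbol\mu}$ in degree $|\boldsymbol\mu|$, and its associated graded algebra has integer structure constants.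
   Context: $q$ is a fixed prime power, $\sigma(z)=z^q$ on $\mathbb{F}_{q^2}$. $U_n(\mathbb{F}_q)=\{g\in GL_n(\mathbb{F}_{q^2}): g^T\sigma(g)=\mathrm{Id}\}$, embedded in $U_{n+1}(\mathbb{F}_q)$ by $g\mapsto\operatorname{diag}(g,1)$. Elements $g\in U_n(\mathbb{F}_q)$, $g'\in U_{n'}(\mathbb{F}_q)$ have the same unitary modified type if for some $N\ge n,n'$ their images in $U_N(\mathbb{F}_q)$ are conjugate in $U_N(\mathbb{F}_q)$; a unitary modified type is such an equivalence class, with size $|\boldsymbol\mu|=\operatorname{rank}(g-\mathrm{Id})$ for $g$ in the class. $X_{\boldsymbol\mu,n}$ is the sum of all elements of $U_n(\mathbb{F}_q)$ of modified type $\boldsymbol\mu$. $[n]_{-q}=((-q)^n-1)/(-q-1)$; $\mathcal{R}_{-q}$ is the $\mathbb{Z}[q,q^{-1}]$-span in $\mathbb{Q}[x]$ of $\binom{x}{k}_{-q}=\frac{x(x-[1]_{-q})\cdots(x-[k-1]_{-q})}{(-q)^{k(k-1)/2}[k]_{-q}!}$. The polynomials $r_{\boldsymbol\mu,\boldsymbol\nu}^{\boldsymbol\lambda}\in\mathcal{R}_{-q}$ are those with $X_{\boldsymbol\mu,n}X_{\boldsymbol\nu,n}=\sum_{\boldsymbol\lambda}r_{\boldsymbol\mu,\boldsymbol\nu}^{\boldsymbol\lambda}([n]_{-q})X_{\boldsymbol\lambda,n}$ for all $n\ge0$. *)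

From HB Require Import structures.
From mathcomp Require Import all_boot all_order all_algebra.
From Stdlib Require Import ClassicalDescription.
Set Implicit Arguments. Unset Strict Implicit. Unset Printing Implicit Defensive.
Import Order.TTheory GRing.Theory Num.Theory.
Local Open Scope ring_scope.

Definition pbool (P : Prop) : bool :=
  if excluded_middle_informative P then true else false.

Section Unitary.
Variables (q : nat) (F : finFieldType).

Definition frob (z : F) : F := z ^+ q.

(* U_n(F_q) = { g in GL_n(F_{q^2}) : g^T sigma(g) = Id } *)
Definition Umat (n : nat) : {set 'M[F]_n} :=
  [set g : 'M[F]_n | (g \in unitmx) && (g^T *m map_mx frob g == 1%:M)].

Definition stelt := {n : nat & 'M[F]_n}.

Definition unitaryE (x : stelt) : Prop := projT2 x \in Umat (projT1 x).

(* The block-diagonal embedding g |-> diag(g, Id_{N-n}) (for n <= N),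
   i.e. iterates of g |-> diag(g, 1). *)
Definition embed (n N : nat) (g : 'M[F]_n) : 'M[F]_N :=
  \matrix_(i < N, j < N)
    match (insub (val i) : option 'I_n), (insub (val j) : option 'I_n) with
    | Some i', Some j' => g i' j'
    | _, _ => ((val i == val j)%N)%:R
    end.

(* Same unitary modified type: images in some U_N (N >= n, n') are conjugate
   in U_N. *)
Definition same_type (x y : stelt) : Prop :=
  exists N : nat, [/\ (projT1 x <= N)%N, (projT1 y <= N)%N &
    exists2 u : 'M[F]_N, u \in Umat N &
      embed N (projT2 y) = u *m embed N (projT2 x) *m invmx u].

(* |mu| = rank(g - Id) for g of type mu. *)
Definition tysize (x : stelt) : nat := \rank (projT2 x - 1%:M).

(* Group algebra Q[U_n], realized as Q-valued functions on n x n matrices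
   supported on U_n, with convolution product. *)
Definition galg (n : nat) := {ffun 'M[F]_n -> rat}.

Definition gmul (n : nat) (a b : galg n) : galg n :=
  [ffun h => \sum_(g1 : 'M[F]_n) \sum_(g2 : 'M[F]_n | g1 *m g2 == h) a g1 * b g2].

(* X_{mu,n}: sum of all elements of U_n of modified type mu (mu given by a
   representative x). *)
Definition Xtype (n : nat) (x : stelt) : galg n :=
  [ffun g => (pbool (g \in Umat n /\ same_type (existT _ n g) x))%:R].

End Unitary.

Definition qint (q n : nat) : rat :=
  ((- (q%:R : rat)) ^+ n - 1) / (- (q%:R : rat) - 1).

Definition qfact (q k : nat) : rat := \prod_(i < k) qint q i.+1.

Definition qbinom_poly (q k : nat) : {poly rat} :=
  (((- (q%:R : rat)) ^+ (k * k.-1)./2 * qfact q k)^-1)%:P *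
  \prod_(i < k) ('X - (qint q i)%:P).

Definition inZqq (q : nat) (c : rat) : Prop :=
  exists (m : nat) (z : int), c = z%:~R / (q%:R ^+ m).

Definition Rq (q : nat) (P : {poly rat}) : Prop :=
  exists (K : nat) (c : 'I_K -> rat),
    (forall k, inZqq q (c k)) /\ P = \sum_(k < K) c k *: qbinom_poly q k.

Arguments Umat q {F} n.
Arguments frob q {F} z.

From HB Require Import structures.
From mathcomp Require Import all_boot all_order all_algebra all_field.
From Stdlib Require Import ClassicalDescription.
Set Implicit Arguments. Unset Strict Implicit. Unset Printing Implicit Defensive.
Import Order.TTheory GRing.Theory Num.Theory.
Local Open Scope ring_scope.

(* Let h = diag(z, Id) in U_n with rank(z - 1) = |mu| + |nu|, and let h = g1 g2 with
   g1, g2 of types mu, nu.  Since g1 g2 - 1 = (g1 - 1) g2 + (g2 - 1), the rank of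
   g - 1 is subadditive, and equality forces the row space of g2 - 1 into that of
   h - 1; dually for g1^T.  Hence g2 - 1 and g1 - 1 vanish on the last n - m
   columns, resp. rows, and unitarity (g^T sigma(g) = 1) propagates this to the
   rows, resp. columns, so g1 = diag(a, Id) and g2 = diag(b, Id).  The coefficient
   of h in X_mu X_nu is therefore independent of n >= m, so r^lambda_{mu,nu} takes
   a constant natural value at the infinitely many distinct points [n]_{-q} and is
   that constant.  When |lambda| > |mu| + |nu| subadditivity alone makes every
   coefficient vanish. *)

Definition zero_rows (R : nmodType) m k n (A : 'M[R]_(k, n)) :=
  forall (i : 'I_k) (j : 'I_n), (m <= i)%N -> A i j = 0.

Definition zero_cols (R : nmodType) m k n (A : 'M[R]_(k, n)) :=
  forall (i : 'I_k) (j : 'I_n), (m <= j)%N -> A i j = 0.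

Lemma zero_cols_tr (R : nmodType) m k n (A : 'M[R]_(k, n)) :
  zero_cols m A^T <-> zero_rows m A.
Proof.
split=> A0 i j lemij; last by rewrite mxE A0.
by have := A0 j i lemij; rewrite mxE.
Qed.

Section ModifiedRank.
Variable F : fieldType.

Lemma mxrank_conj_sub1 n (u A : 'M[F]_n) : u \in unitmx ->
  \rank (u *m A *m invmx u - 1%:M) = \rank (A - 1%:M).
Proof.
move=> Uu; have -> : u *m A *m invmx u - 1%:M = u *m (A - 1%:M) *m invmx u.
  by rewrite mulmxBr mulmxBl mulmx1 mulmxV.
have fullu : row_full u by rewrite row_full_unit.
by rewrite mxrankMfree ?row_free_unit ?unitmx_inv // (eqmxMfull _ fullu).
Qed.

Lemma mul_sub1E n (A B : 'M[F]_n) : A *m B - 1%:M = (A - 1%:M) *m B + (B - 1%:M).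
Proof. by rewrite mulmxBl mul1mx addrA subrK. Qed.

Lemma mxrank_mul_sub1 n (A B : 'M[F]_n) :
  (\rank (A *m B - 1%:M)%R <= \rank (A - 1%:M)%R + \rank (B - 1%:M)%R)%N.
Proof.
rewrite mul_sub1E; apply: leq_trans (mxrank_add _ _) _.
by rewrite leq_add2r mxrankM_maxl.
Qed.

Lemma sub1_submx_mul n (A B : 'M[F]_n) : B \in unitmx ->
  \rank (A *m B - 1%:M) = (\rank (A - 1%:M)%R + \rank (B - 1%:M)%R)%N ->
  (B - 1%:M <= A *m B - 1%:M)%MS.
Proof.
move=> UB rankAB.
set S := ((A - 1%:M) *m B + (B - 1%:M))%MS.
have sABS : (A *m B - 1%:M <= S)%MS by rewrite mul_sub1E addmx_sub_adds.
have rankS : (\rank S <= \rank (A *m B - 1%:M)%R)%N.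
  apply: leq_trans (leq_of_leqif (mxrank_adds_leqif _ _)) _.
  by rewrite rankAB mxrankMfree // row_free_unit.
have [_ eqABS] := mxrank_leqif_sup sABS.
have sSAB : (S <= A *m B - 1%:M)%MS by rewrite -eqABS eqn_leq rankS mxrankS.
exact: submx_trans (addsmxSr _ _) sSAB.
Qed.

Lemma submx_zero_cols m k l n (B : 'M[F]_(k, n)) (C : 'M[F]_(l, n)) :
  (B <= C)%MS -> zero_cols m C -> zero_cols m B.
Proof.
by move=> /submxP[D ->] C0 i j lemj; rewrite mxE big1 // => r _; rewrite C0 ?mulr0.
Qed.

Lemma factor_zero_cols m n (A B : 'M[F]_n) : B \in unitmx ->
  \rank (A *m B - 1%:M) = (\rank (A - 1%:M)%R + \rank (B - 1%:M)%R)%N ->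
  zero_cols m (A *m B - 1%:M) -> zero_cols m (B - 1%:M).
Proof. by move=> UB rankAB; apply/submx_zero_cols/sub1_submx_mul. Qed.

End ModifiedRank.

Section Embedding.
Variable F : finFieldType.

Lemma embed_in m N (g : 'M[F]_m) (i j : 'I_N) (ltim : (i < m)%N) (ltjm : (j < m)%N) :
  embed N g i j = g (Ordinal ltim) (Ordinal ltjm).
Proof. by rewrite mxE (insubT (fun k => k < m)%N ltim) (insubT (fun k => k < m)%N ltjm). Qed.

Lemma embed_out m N (g : 'M[F]_m) (i j : 'I_N) :
  ~~ ((i < m) && (j < m))%N -> embed N g i j = (i == j :> nat)%:R.
Proof.
rewrite mxE; case: (boolP (i < m)%N) => [ltim /= gejm | geim _].
  by rewrite (insubT (fun k => k < m)%N ltim) insubF ?(negbTE gejm).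
by rewrite insubF ?(negbTE geim).
Qed.

Lemma mul_pid_mx_in m N l (A : 'M[F]_(m, l)) (i : 'I_N) (ltim : (i < m)%N) c :
  (pid_mx m *m A) i c = A (Ordinal ltim) c.
Proof.
rewrite mxE (bigD1 (Ordinal ltim)) //= mxE eqxx ltim mul1r big1 ?addr0 // => k.
by rewrite mxE -val_eqE eq_sym => /negbTE ->; rewrite mul0r.
Qed.

Lemma mul_pid_mx_out m N l (A : 'M[F]_(m, l)) (i : 'I_N) c :
  ~~ (i < m)%N -> (pid_mx m *m A) i c = 0.
Proof. by move=> /negbTE geim; rewrite mxE big1 // => k _; rewrite mxE geim andbF mul0r. Qed.

Lemma embedE m N (g : 'M[F]_m) :
  embed N g = 1%:M + (pid_mx m : 'M_(N, m)) *m (g - 1%:M) *m pid_mx m.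
Proof.
set P := pid_mx m : 'M_(N, m).
have -> : P *m (g - 1%:M) *m pid_mx m = (P *m (P *m (g - 1%:M))^T)^T.
  by rewrite trmx_mul trmxK tr_pid_mx.
apply/matrixP => i j; rewrite [RHS]mxE [_^T i j]mxE [1%:M i j]mxE.
have [/andP[ltim ltjm] | out] := boolP ((i < m) && (j < m))%N.
  rewrite embed_in (mul_pid_mx_in _ ltjm) mxE (mul_pid_mx_in _ ltim) !mxE.
  by rewrite -val_eqE /= addrC subrK.
rewrite embed_out //; case: (boolP (j < m)%N) => [ltjm | gejm]; last first.
  by rewrite mul_pid_mx_out ?addr0.
rewrite (mul_pid_mx_in _ ltjm) mxE mul_pid_mx_out ?addr0 //.
by move: out; rewrite ltjm andbT.
Qed.

Lemma embed_sub1 m N (g : 'M[F]_m) :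
  embed N g - 1%:M = (pid_mx m : 'M_(N, m)) *m (g - 1%:M) *m pid_mx m.
Proof. by rewrite embedE addrC addKr. Qed.

Lemma embed1 m N : embed N (1%:M : 'M[F]_m) = 1%:M.
Proof. by rewrite embedE subrr mulmx0 mul0mx addr0. Qed.

Section Widening.
Variables m N : nat.
Hypothesis lemN : (m <= N)%N.

Lemma pid_mx_retract : (pid_mx m : 'M[F]_(m, N)) *m pid_mx m = 1%:M.
Proof. by rewrite pid_mx_id // pid_mx_1. Qed.

Lemma embed_sub1K (g : 'M[F]_m) :
  pid_mx m *m (embed N g - 1%:M) *m pid_mx m = g - 1%:M.
Proof. by rewrite embed_sub1 !mulmxA pid_mx_retract mul1mx -mulmxA pid_mx_retract mulmx1. Qed.

Lemma embed_inj : injective (@embed F m N).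
Proof. by move=> a b eq_ab; apply: (addIr (- 1%:M)); rewrite -!embed_sub1K eq_ab. Qed.

Lemma pid_mx_embed (b : 'M[F]_m) : pid_mx m *m embed N b = b *m pid_mx m.
Proof.
rewrite embedE mulmxDr mulmx1 !mulmxA pid_mx_retract mul1mx mulmxBl mul1mx.
by rewrite addrC subrK.
Qed.

Lemma embedM (a b : 'M[F]_m) : embed N (a *m b) = embed N a *m embed N b.
Proof.
rewrite [embed N a]embedE mulmxDl mul1mx -!mulmxA pid_mx_embed !embedE mul_sub1E.
by rewrite mulmxDr mulmxDl -addrA; congr (_ + _); rewrite addrC !mulmxA.
Qed.

Lemma mxrank_embed_sub1 (g : 'M[F]_m) : \rank (embed N g - 1%:M) = \rank (g - 1%:M).
Proof.
apply/eqP; rewrite eqn_leq; apply/andP; split.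
  by rewrite embed_sub1; apply: leq_trans (mxrankM_maxl _ _) (mxrankM_maxr _ _).
by rewrite -{1}embed_sub1K; apply: leq_trans (mxrankM_maxl _ _) (mxrankM_maxr _ _).
Qed.

Lemma embed_invmx (u : 'M[F]_m) : u \in unitmx -> embed N (invmx u) = invmx (embed N u).
Proof.
move=> Uu; have uVu : embed N u *m embed N (invmx u) = 1%:M.
  by rewrite -embedM mulmxV // embed1.
have [Ueu _] := mulmx1_unit uVu.
by rewrite -[LHS]mul1mx -(mulVmx Ueu) -mulmxA uVu mulmx1.
Qed.

End Widening.

Lemma embed_tr m N (g : 'M[F]_m) : embed N g^T = (embed N g)^T.
Proof.
rewrite !embedE [RHS]linearD /= trmx1 !trmx_mul !tr_pid_mx.
by rewrite [(g - 1%:M)^T]linearB /= trmx1 mulmxA.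
Qed.

Lemma embed_embed m n N (g : 'M[F]_m) : (m <= n)%N ->
  embed N (embed n g) = embed N g.
Proof.
move=> lemn; rewrite embedE embed_sub1 !mulmxA mul_pid_mx -!mulmxA mul_pid_mx.
by rewrite (minn_idPr lemn) (minn_idPl lemn) (minn_idPr lemn) mulmxA -embedE.
Qed.

End Embedding.

Lemma sum_mul_delta (R : pzSemiRingType) n (f : 'I_n -> R) (j : 'I_n) :
  \sum_k f k * (k == j)%:R = f j.
Proof. by rewrite (bigD1 j) //= eqxx mulr1 big1 ?addr0 // => k /negbTE ->; rewrite mulr0. Qed.

Lemma sub1_entry_eq0 (R : pzRingType) n (g : 'M[R]_n) i j :
  ((g - 1%:M) i j == 0) = (g i j == (i == j)%:R).
Proof. by rewrite !mxE subr_eq0. Qed.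

Section Unitary.
Variables (F : finFieldType) (q : nat).
Hypothesis q_gt0 : (0 < q)%N.
Hypothesis card_F : #|F| = (q ^ 2)%N.

Lemma frob_nat (b : bool) : frob q (b%:R : F) = b%:R.
Proof. by case: b; rewrite /frob ?expr1n // expr0n; case: q q_gt0. Qed.

Lemma frobK : involutive (frob q : F -> F).
Proof. by move=> z; rewrite /frob -exprM mulnn -card_F expf_card. Qed.

Lemma map_frob_embed m N (g : 'M[F]_m) :
  map_mx (frob q) (embed N g) = embed N (map_mx (frob q) g).
Proof.
apply/matrixP => i j; rewrite mxE.
have [/andP[ltim ltjm] | out] := boolP ((i < m) && (j < m))%N.
  by rewrite !embed_in mxE.
by rewrite !embed_out // frob_nat.
Qed.

Lemma UmatE n (g : 'M[F]_n) : (g \in Umat q n) = (g^T *m map_mx (frob q) g == 1%:M).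
Proof.
rewrite inE; case: eqP => [gUg | _]; last by rewrite andbF.
by rewrite andbT -unitmx_tr; case: (mulmx1_unit gUg).
Qed.

Lemma Umat_unit n (g : 'M[F]_n) : g \in Umat q n -> g \in unitmx.
Proof. by rewrite inE => /andP[]. Qed.

Lemma Umat1 n : (1%:M : 'M[F]_n) \in Umat q n.
Proof. by rewrite UmatE trmx1 mul1mx; apply/eqP/matrixP => i j; rewrite !mxE frob_nat. Qed.

Lemma Umat_embed m N (g : 'M[F]_m) : (m <= N)%N ->
  (embed N g \in Umat q N) = (g \in Umat q m).
Proof.
move=> lemN; rewrite !UmatE -embed_tr map_frob_embed -embedM //.
by rewrite -(embed1 F m N) (inj_eq (embed_inj lemN)).
Qed.

Lemma Umat_zero_rows_cols m n (g : 'M[F]_n) :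
  g \in Umat q n -> zero_rows m (g - 1%:M) -> zero_cols m (g - 1%:M).
Proof.
rewrite UmatE => /eqP/mulmx1C gUg g_rows i j lemj; apply/eqP.
have row_j k : g j k = (j == k)%:R by apply/eqP; rewrite -sub1_entry_eq0 g_rows.
have /matrixP/(_ i j) := gUg; rewrite !mxE.
under eq_bigr => k _ do rewrite !mxE row_j eq_sym.
by rewrite sum_mul_delta subr_eq0 => /(congr1 (frob q)); rewrite frobK frob_nat => ->.
Qed.

Lemma Umat_zero_cols_rows m n (g : 'M[F]_n) :
  g \in Umat q n -> zero_cols m (g - 1%:M) -> zero_rows m (g - 1%:M).
Proof.
rewrite UmatE => /eqP gUg g_cols i j lemi; apply/eqP.
have col_i k : g k i = (k == i)%:R by apply/eqP; rewrite -sub1_entry_eq0 g_cols.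
have /matrixP/(_ i j) := gUg; rewrite !mxE.
under eq_bigr => k _ do rewrite !mxE col_i mulrC.
by rewrite sum_mul_delta subr_eq0 => /(congr1 (frob q)); rewrite frobK frob_nat => ->.
Qed.

End Unitary.

Section BlockFactors.
Variables (F : finFieldType) (q : nat).
Hypothesis q_gt0 : (0 < q)%N.
Hypothesis card_F : #|F| = (q ^ 2)%N.
Variables m n : nat.
Hypothesis lemn : (m <= n)%N.

Notation corner g := (mxsub (widen_ord lemn) (widen_ord lemn) g).

Lemma zero_rows_embed_sub1 (z : 'M[F]_m) : zero_rows m (embed n z - 1%:M).
Proof. by move=> i j lemi; apply/eqP; rewrite sub1_entry_eq0 embed_out // negb_and -leqNgt lemi. Qed.

Lemma zero_cols_embed_sub1 (z : 'M[F]_m) : zero_cols m (embed n z - 1%:M).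
Proof.
by move=> i j lemj; apply/eqP; rewrite sub1_entry_eq0 embed_out // negb_and -!leqNgt lemj orbT.
Qed.

Lemma embed_corner (g : 'M[F]_n) :
  zero_rows m (g - 1%:M) -> zero_cols m (g - 1%:M) -> g = embed n (corner g).
Proof.
move=> g_rows g_cols; apply/matrixP => i j.
have [/andP[ltim ltjm] | out] := boolP ((i < m) && (j < m))%N.
  by rewrite embed_in mxE; congr (g _ _); apply: val_inj.
rewrite embed_out //; apply/eqP; rewrite -sub1_entry_eq0.
by move: out; rewrite negb_and -!leqNgt => /orP[/g_rows | /g_cols] ->.
Qed.

Lemma Umat_factors_embed (z : 'M[F]_m) (g1 g2 : 'M[F]_n) :
  g1 \in Umat q n -> g2 \in Umat q n -> g1 *m g2 = embed n z ->
  \rank (embed n z - 1%:M) = (\rank (g1 - 1%:M)%R + \rank (g2 - 1%:M)%R)%N ->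
  g1 = embed n (corner g1) /\ g2 = embed n (corner g2).
Proof.
move=> U1 U2 g12 rank12.
have g2_cols : zero_cols m (g2 - 1%:M).
  apply: (factor_zero_cols (A := g1)); first exact: Umat_unit U2.
    by rewrite g12.
  by rewrite g12; apply: zero_cols_embed_sub1.
have g1_rows : zero_rows m (g1 - 1%:M).
  have trB1 (g : 'M[F]_n) : g^T - 1%:M = (g - 1%:M)^T by rewrite linearB /= trmx1.
  apply/zero_cols_tr; rewrite -trB1.
  apply: (factor_zero_cols (A := g2^T)); first by rewrite unitmx_tr; exact: Umat_unit U1.
    by rewrite -trmx_mul !trB1 !mxrank_tr g12 rank12 addnC.
  by rewrite -trmx_mul g12 trB1; apply/zero_cols_tr/zero_rows_embed_sub1.
split; apply: embed_corner => //.
  exact: Umat_zero_rows_cols U1 g1_rows.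
exact: Umat_zero_cols_rows U2 g2_cols.
Qed.

End BlockFactors.

Lemma pboolP (P : Prop) : reflect P (pbool P).
Proof. by rewrite /pbool; case: excluded_middle_informative => ?; constructor. Qed.

Lemma eq_pbool (P Q : Prop) : (P <-> Q) -> pbool P = pbool Q.
Proof. by move=> PQ; apply/idP/idP => /pboolP/PQ/pboolP. Qed.

Lemma sum_embed_support (F : finFieldType) (V : nmodType) m n (G : 'M[F]_n -> V) :
  (m <= n)%N -> (forall g, G g != 0 -> exists a : 'M[F]_m, g = embed n a) ->
  \sum_g G g = \sum_(a : 'M[F]_m) G (embed n a).
Proof.
move=> lemn supp; rewrite (bigID (mem (embed n @: [set: 'M[F]_m]))) /=.
rewrite [X in _ + X]big1 ?addr0; last first.
  move=> g /negP g_out; apply/eqP/negP => /negP /supp[a ga]; apply: g_out.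
  by rewrite ga imset_f ?in_setT.
rewrite big_imset /=; last by move=> a b _ _; apply: embed_inj.
by apply: eq_bigl => a; rewrite in_setT.
Qed.

Section ModifiedTypes.
Variables (F : finFieldType) (q : nat).
Hypothesis q_gt0 : (0 < q)%N.
Hypothesis card_F : #|F| = (q ^ 2)%N.

Lemma same_type_refl (x : stelt F) : same_type q x x.
Proof.
exists (projT1 x); split => //; exists 1%:M; first exact: Umat1.
by rewrite mul1mx invmx1 mulmx1.
Qed.

Lemma same_type_embedl m n (a : 'M[F]_m) (x : stelt F) : (m <= n)%N ->
  same_type q (existT _ n (embed n a)) x <-> same_type q (existT _ m a) x.
Proof.
move=> lemn; split => -[N [/= leN lexN [u Uu conj_u]]].
  by exists N; split => //=; [exact: leq_trans leN | exists u; rewrite // conj_u embed_embed].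
have leNM := leq_maxl N n.
exists (maxn N n); split => //=; first exact: leq_maxr.
  exact: leq_trans leNM.
exists (embed (maxn N n) u); first by rewrite Umat_embed.
rewrite embed_embed ?leq_maxr // -(embed_embed _ _ lexN) conj_u.
by rewrite !embedM // embed_embed // embed_invmx // (Umat_unit Uu).
Qed.

Lemma tysize_same_type (x y : stelt F) : same_type q x y -> tysize x = tysize y.
Proof.
case=> N [lexN leyN [u Uu conj_u]]; rewrite /tysize.
rewrite -(mxrank_embed_sub1 lexN) -(mxrank_embed_sub1 leyN) conj_u.
by rewrite mxrank_conj_sub1 // (Umat_unit Uu).
Qed.

Lemma Xtype_embed m n (x : stelt F) (a : 'M[F]_m) : (m <= n)%N ->
  Xtype q n x (embed n a) = Xtype q m x a.
Proof.
move=> lemn; rewrite !ffunE Umat_embed //.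
congr ((nat_of_bool _)%:R); apply: eq_pbool.
by split => -[Ua xa]; split => //; apply/(same_type_embedl _ _ lemn).
Qed.

Lemma Xtype_neq0 n (x : stelt F) (g : 'M[F]_n) : Xtype q n x g != 0 ->
  g \in Umat q n /\ \rank (g - 1%:M) = tysize x.
Proof.
rewrite ffunE pnatr_eq0 eqb0 negbK => /pboolP[Ug gx].
by split => //; apply: (tysize_same_type gx).
Qed.

Lemma Xtype_nat n (x : stelt F) (g : 'M[F]_n) : Xtype q n x g \is a Num.nat.
Proof. by rewrite ffunE rpred_nat. Qed.

Definition conv_term n (a b : galg F n) (h g1 g2 : 'M[F]_n) : rat :=
  if g1 *m g2 == h then a g1 * b g2 else 0.

Lemma gmulE n (a b : galg F n) (h : 'M[F]_n) :
  gmul a b h = \sum_g1 \sum_g2 conv_term a b h g1 g2.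
Proof. by rewrite ffunE; apply: eq_bigr => g1 _; rewrite big_mkcond. Qed.

Lemma conv_term_Xtype_neq0 n (x y : stelt F) (h g1 g2 : 'M[F]_n) :
  conv_term (Xtype q n x) (Xtype q n y) h g1 g2 != 0 ->
  [/\ g1 *m g2 = h, g1 \in Umat q n, g2 \in Umat q n,
      \rank (g1 - 1%:M) = tysize x & \rank (g2 - 1%:M) = tysize y].
Proof.
rewrite /conv_term; case: (g1 *m g2 =P h) => [g12 | _]; last by rewrite eqxx.
by rewrite mulf_eq0 negb_or => /andP[/Xtype_neq0[U1 r1] /Xtype_neq0[U2 r2]].
Qed.

Lemma gmul_Xtype_eq0 n (x y : stelt F) (h : 'M[F]_n) :
  (tysize x + tysize y < \rank (h - 1%:M)%R)%N ->
  gmul (Xtype q n x) (Xtype q n y) h = 0.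
Proof.
move=> rank_h; rewrite gmulE big1 // => g1 _; rewrite big1 // => g2 _.
apply/eqP/negP => /negP/conv_term_Xtype_neq0[g12 _ _ r1 r2].
by move: rank_h; rewrite -g12 -r1 -r2 ltnNge mxrank_mul_sub1.
Qed.

Lemma gmul_Xtype_embed m n (x y : stelt F) (z : 'M[F]_m) : (m <= n)%N ->
  \rank (z - 1%:M) = (tysize x + tysize y)%N ->
  gmul (Xtype q n x) (Xtype q n y) (embed n z) = gmul (Xtype q m x) (Xtype q m y) z.
Proof.
move=> lemn rank_z; rewrite !gmulE.
set T := conv_term (Xtype q n x) (Xtype q n y) (embed n z).
have T_embed g1 g2 : T g1 g2 != 0 ->
    (exists a : 'M[F]_m, g1 = embed n a) /\ (exists b : 'M[F]_m, g2 = embed n b).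
  case/conv_term_Xtype_neq0 => g12 U1 U2 r1 r2.
  have rank12 : \rank (embed n z - 1%:M) = (\rank (g1 - 1%:M)%R + \rank (g2 - 1%:M)%R)%N.
    by rewrite mxrank_embed_sub1 // rank_z r1 r2.
  have [g1E g2E] := Umat_factors_embed q_gt0 card_F lemn U1 U2 g12 rank12.
  by split; eexists; [exact: g1E | exact: g2E].
have inner g1 : \sum_g2 T g1 g2 = \sum_(b : 'M[F]_m) T g1 (embed n b).
  by apply: sum_embed_support => // g2 /T_embed[].
under eq_bigr => g1 _ do rewrite inner.
rewrite (sum_embed_support lemn); last first.
  move=> g1 /negP sum_neq0.
  case: (pickP (fun b : 'M[F]_m => T g1 (embed n b) != 0)) => [b /T_embed[] // | T0].
  by case: sum_neq0; rewrite big1 // => b _; apply/eqP/negbFE/T0.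
apply: eq_bigr => a _; apply: eq_bigr => b _.
by rewrite /T /conv_term -embedM // (inj_eq (embed_inj lemn)) !Xtype_embed.
Qed.

Lemma gmul_Xtype_nat n (x y : stelt F) (h : 'M[F]_n) :
  gmul (Xtype q n x) (Xtype q n y) h \is a Num.nat.
Proof. by rewrite ffunE; do 2 apply: rpred_sum => ? _; rewrite rpredM ?Xtype_nat. Qed.

End ModifiedTypes.

Lemma qint_inj q : (1 < q)%N -> injective (qint q).
Proof.
move=> q_gt1 a b; rewrite /qint => eq_ab.
have den_neq0 : - (q%:R : rat) - 1 != 0 by rewrite -opprD oppr_eq0 natr1 pnatr_eq0.
move/(congr1 (fun t => t * (- (q%:R : rat) - 1))): eq_ab; rewrite /= !divfK //.
move/addIr/(congr1 (fun t : rat => `|t|)); rewrite !normrX normrN normr_nat -!natrX.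
by move/eqP; rewrite eqr_nat => /eqP/expnI; apply.
Qed.

Lemma eq_polyC_qint q m (P : {poly rat}) (c : rat) : (1 < q)%N ->
  (forall n, (m <= n)%N -> P.[qint q n] = c) -> P = c%:P.
Proof.
move=> q_gt1 Pc; apply/eqP; rewrite -subr_eq0; apply/negPn/negP => nz_d.
set d := P - c%:P in nz_d.
pose rs := mkseq (fun i => qint q (m + i)) (size d).
have /max_poly_roots : all (root d) rs.
  by apply/allP => _ /mapP[i _ ->]; rewrite /root hornerD hornerN hornerC Pc ?leq_addr ?subrr.
rewrite size_mkseq ltnn mkseq_uniq; last by move=> i j /(qint_inj q_gt1)/addnI.
by move/(_ nz_d isT).
Qed.

Theorem theorem8p7 (p k q : nat) (F : finFieldType)
  (hp : prime p) (hk : (0 < k)%N) (hq : q = (p ^ k)%N)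
  (hF : #|F| = (q ^ 2)%N)
  (r : stelt F -> stelt F -> stelt F -> {poly rat})
  (r_inv : forall x x' y y' z z',
     unitaryE q x -> unitaryE q y -> unitaryE q z ->
     same_type q x x' -> same_type q y y' -> same_type q z z' ->
     r x y z = r x' y' z')
  (r_Rq : forall x y z, unitaryE q x -> unitaryE q y -> unitaryE q z ->
     Rq q (r x y z))
  (r_def : forall x y : stelt F, unitaryE q x -> unitaryE q y -> forall n : nat,
     gmul (Xtype q n x) (Xtype q n y) =
     [ffun h : 'M[F]_n => if h \in Umat q n
                          then (r x y (existT _ n h)).[qint q n] else 0]) :
  forall x y z : stelt F, unitaryE q x -> unitaryE q y -> unitaryE q z ->
    ((tysize x + tysize y < tysize z)%N -> r x y z = 0) /\
    (tysize z = (tysize x + tysize y)%N -> exists c : int, r x y z = (c%:~R)%:P).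
Proof.
move=> x y [m z] ux uy uz; rewrite /unitaryE /= in uz.
have q_gt1 : (1 < q)%N.
  by rewrite hq; apply: leq_trans (prime_gt1 hp) _; rewrite -{1}(expn1 p) leq_pexp2l // prime_gt0.
have q_gt0 := ltnW q_gt1.
have r_at n : (m <= n)%N ->
    (r x y (existT _ m z)).[qint q n] = gmul (Xtype q n x) (Xtype q n y) (embed n z).
  move=> lemn; have Uz : embed n z \in Umat q n by rewrite Umat_embed.
  rewrite (r_def x y ux uy n) ffunE Uz; congr (_.[_]); symmetry.
  apply: r_inv => //; try exact: same_type_refl q_gt0 _.
  by apply/(same_type_embedl q_gt0 _ _ lemn)/same_type_refl.
split => rank_z.
  apply: (eq_polyC_qint (m := m) q_gt1) => n lemn.
  by rewrite r_at // gmul_Xtype_eq0 // mxrank_embed_sub1.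
have /natrP[c cE] := gmul_Xtype_nat q x y z.
exists c; rewrite -pmulrn -cE; apply: (eq_polyC_qint (m := m) q_gt1) => n lemn.
by rewrite r_at // (gmul_Xtype_embed q_gt0 hF).
Qed.
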